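(* Let $R$ be a commutative ring with identity, $\mathcal S$ an associative prime algebra over $R$ with identity, and $\mathcal M$ a $2$-torsion free, jointly prime bimodule over $\mathcal S$. Let $\delta$ be a derivation on $\mathcal S$ and $f:\mathcal S\to\mathcal M$ a bimodule homomorphism over $\mathcal S$. If $D:\mathcal S\to\mathcal M$ is a Jordan $(\delta,f)$-derivation on $\mathcal M$, then $D$ is a $(\delta,f)$-derivation on $\mathcal M$, i.e. $D(xy)=D(x)y+f(x)\delta(y)$ for all $x,y\in\mathcal S$.
   Context: A derivation on $\mathcal S$ is an additive map $\delta:\mathcal S\to\mathcal S$ with $\delta(ab)=\delta(a)b+a\delta(b)$. An additive map $D:\mathcal S\to\mathcal M$ is a $(\delta,f)$-derivation on $\mathcal M$ if $D(xy)=D(x)y+f(x)\delta(y)$ for all $x,y\in\mathcal S$, and a Jordan $(\delta,f)$-derivation on $\mathcal M$ if $D(x^2)=D(x)x+f(x)\delta(x)$ for all $x\in\mathcal S$. $\mathcal M$ is $2$-torsion free if $2m=0$ implies $m=0$. A proper bisubmodule $\mathcal K$ of $\mathcal M$ is jointly prime if for every left ideal $I$ of $\mathcal S$, right ideal $J$ of $\mathcal S$ and bisubmodule $\mathcal N$ of $\mathcal M$, $I\mathcal N J\subseteq\mathcal K$ implies $I\mathcal M J\subseteq \mathcal K$ or $\mathcal N\subseteq\mathcal K$; $\mathcal M$ is jointly prime if its zero bisubmodule is jointly prime. The algebra $\mathcal S$ is prime if for any two ($R$-)ideals $U,V$ of $\mathcal S$, $UV=0$ implies $U=0$ or $V=0$.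 *)

From mathcomp Require Import all_boot all_algebra.
Set Implicit Arguments. Unset Strict Implicit. Unset Printing Implicit Defensive.
Import GRing.Theory.
Local Open Scope ring_scope.

Definition is_bimodule (S : nzRingType) (M : zmodType)
  (la : S -> M -> M) (ra : M -> S -> M) : Prop :=
  [/\ (forall a m n, la a (m + n) = la a m + la a n),
      (forall a b m, la (a + b) m = la a m + la b m),
      (forall m n a, ra (m + n) a = ra m a + ra n a),
      (forall m a b, ra m (a + b) = ra m a + ra m b) &
   [/\ (forall a b m, la (a * b) m = la a (la b m)),
      (forall m a b, ra m (a * b) = ra (ra m a) b),
      (forall a m b, ra (la a m) b = la a (ra m b)),
      (forall m, la 1 m = m) &
      (forall m, ra m 1 = m)]].

Definition is_addsubgroup (V : zmodType) (P : V -> Prop) : Prop :=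
  P 0 /\ (forall x y, P x -> P y -> P (x - y)).

Definition is_left_ideal (R : comNzRingType) (S : algType R) (I : S -> Prop) :=
  is_addsubgroup I /\ (forall (r : R) x, I x -> I (r *: x)) /\
  (forall a x, I x -> I (a * x)).
Definition is_right_ideal (R : comNzRingType) (S : algType R) (I : S -> Prop) :=
  is_addsubgroup I /\ (forall (r : R) x, I x -> I (r *: x)) /\
  (forall a x, I x -> I (x * a)).
Definition is_ideal (R : comNzRingType) (S : algType R) (I : S -> Prop) :=
  is_left_ideal I /\ is_right_ideal I.

Definition prime_algebra (R : comNzRingType) (S : algType R) : Prop :=
  forall U V : S -> Prop, is_ideal U -> is_ideal V ->
    (forall u v, U u -> V v -> u * v = 0) ->
    (forall u, U u -> u = 0) \/ (forall v, V v -> v = 0).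

Definition is_bisubmodule (S : nzRingType) (M : zmodType)
  (la : S -> M -> M) (ra : M -> S -> M) (N : M -> Prop) : Prop :=
  is_addsubgroup N /\ (forall a m, N m -> N (la a m)) /\
  (forall m a, N m -> N (ra m a)).

(* M is jointly prime: its zero bisubmodule is jointly prime, i.e.
   I N J = 0 implies I M J = 0 or N = 0. *)
Definition jointly_prime (R : comNzRingType) (S : algType R) (M : zmodType)
  (la : S -> M -> M) (ra : M -> S -> M) : Prop :=
  forall (I J : S -> Prop) (N : M -> Prop),
    is_left_ideal I -> is_right_ideal J -> is_bisubmodule la ra N ->
    (forall a n b, I a -> N n -> J b -> la a (ra n b) = 0) ->
    (forall a m b, I a -> J b -> la a (ra m b) = 0) \/
    (forall n, N n -> n = 0).

Definition two_torsion_free (M : zmodType) : Prop :=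
  forall m : M, m *+ 2 = 0 -> m = 0.

Definition is_derivation (S : nzRingType) (d : S -> S) : Prop :=
  (forall x y, d (x + y) = d x + d y) /\
  (forall x y, d (x * y) = d x * y + x * d y).

Definition is_bimodule_hom (S : nzRingType) (M : zmodType)
  (la : S -> M -> M) (ra : M -> S -> M) (f : S -> M) : Prop :=
  [/\ (forall x y, f (x + y) = f x + f y),
      (forall a x, f (a * x) = la a (f x)) &
      (forall x a, f (x * a) = ra (f x) a)].

Definition is_jordan_df_derivation (S : nzRingType) (M : zmodType)
  (la : S -> M -> M) (ra : M -> S -> M) (d : S -> S) (f D : S -> M) : Prop :=
  (forall x y, D (x + y) = D x + D y) /\
  (forall x, D (x * x) = ra (D x) x + ra (f x) (d x)).

Definition is_df_derivation (S : nzRingType) (M : zmodType)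
  (la : S -> M -> M) (ra : M -> S -> M) (d : S -> S) (f D : S -> M) : Prop :=
  (forall x y, D (x + y) = D x + D y) /\
  (forall x y, D (x * y) = ra (D x) y + ra (f x) (d y)).

(** Because S has an identity, linearizing the Jordan identity at the pair
    (x, 1) gives D x = D(1) x + f(1) δ(x), and every map of this form is a
    (δ, f)-derivation since f(1) x = f(x). *)

From mathcomp Require Import all_boot all_algebra ssrAC.
Set Implicit Arguments.
Unset Strict Implicit.
Unset Printing Implicit Defensive.
Import GRing.Theory.
Local Open Scope ring_scope.

Section JordanDerivation.

Variables (S : nzRingType) (M : zmodType) (ra : M -> S -> M).
Variables (d : S -> S) (f D : S -> M).

Hypothesis raDl : forall m n a, ra (m + n) a = ra m a + ra n a.
Hypothesis raDr : forall m a b, ra m (a + b) = ra m a + ra m b.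
Hypothesis raA : forall m a b, ra m (a * b) = ra (ra m a) b.
Hypothesis ra1 : forall m, ra m 1 = m.
Hypothesis dD : forall x y, d (x + y) = d x + d y.
Hypothesis dM : forall x y, d (x * y) = d x * y + x * d y.
Hypothesis fD : forall x y, f (x + y) = f x + f y.
Hypothesis fMr : forall x a, f (x * a) = ra (f x) a.
Hypothesis DD : forall x y, D (x + y) = D x + D y.
Hypothesis DJ : forall x, D (x * x) = ra (D x) x + ra (f x) (d x).

Lemma ra0 m : ra m 0 = 0.
Proof. by apply: (@addrI _ (ra m 0)); rewrite -raDr !addr0. Qed.

Lemma derivation1 : d 1 = 0.
Proof.
have := dM 1 1; rewrite !mulr1 mul1r => d1_twice.
by apply: (@addrI _ (d 1)); rewrite addr0 -d1_twice.
Qed.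

Lemma jordan_polarized x y :
  D (x * y) + D (y * x) =
  ra (D x) y + ra (D y) x + (ra (f x) (d y) + ra (f y) (d x)).
Proof.
have sq : (x + y) * (x + y) = x * x + (x * y + y * x) + y * y.
  by rewrite mulrDl !mulrDr !addrA.
have := DJ (x + y); rewrite sq !DD !DJ fD dD !raDl !raDr.
(* group the terms of D(x²) and of D(y²) at both ends, to cancel them *)
rewrite [RHS](AC ((2*2)*(2*2)) ((1*5)*(2*3*(6*7))*(4*8))).
by move=> /= /addIr /addrI.
Qed.

Lemma jordanE x : D x = ra (D 1) x + ra (f 1) (d x).
Proof.
have := jordan_polarized x 1.
by rewrite mulr1 mul1r ra1 derivation1 ra0 add0r -addrA => /addrI.
Qed.

Lemma jordanM x y : D (x * y) = ra (D x) y + ra (f x) (d y).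
Proof.
rewrite (jordanE (x * y)) (jordanE x) dM raDr !raA raDl addrA.
by rewrite -(fMr 1 x) mul1r.
Qed.

End JordanDerivation.

Theorem theorem3p22 (R : comNzRingType) (S : algType R) (M : zmodType)
  (la : S -> M -> M) (ra : M -> S -> M)
  (d : S -> S) (f D : S -> M) :
  prime_algebra S ->
  is_bimodule la ra ->
  two_torsion_free M ->
  jointly_prime la ra ->
  is_derivation d ->
  is_bimodule_hom la ra f ->
  is_jordan_df_derivation la ra d f D ->
  is_df_derivation la ra d f D.
Proof.
move=> _ [_ _ raDl raDr [_ raA _ _ ra1]] _ _ [dD dM] [fD _ fMr] [DD DJ].
split=> // x y.
exact: (jordanM raDl raDr raA ra1 dD dM fD fMr DD DJ).
Qed.
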